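(* Let $\Sigma^*$ be an $n\times n$ positive definite matrix whose conditional independence structure is a tree $T^*$, with smallest eigenvalue $\lambda^*$, let $D^*$ be a diagonal matrix with nonnegative entries satisfying $D^*_{ii}<\lambda^*$ for all $i$, and let $\Sigma^o=\Sigma^*+D^*$. Then for every decomposition $\Sigma^o=\Sigma'+D'$ in which $\Sigma'$ is positive definite with smallest eigenvalue at least $\lambda^*$ and conditional independence structure a tree $T'$, and $D'$ is diagonal with nonnegative entries, we have $T'=T^*$.
   Context: For an $n\times n$ positive definite matrix $\Sigma$ with inverse $\Omega$, its conditional independence structure is the graph on $\{1,\dots,n\}$ with an edge $\{i,j\}$ ($i\neq j$) iff $\Omega_{ij}\neq 0$. *)

From HB Require Import structures.
From mathcomp Require Import all_boot all_order all_algebra.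
From mathcomp Require Import reals.
Set Implicit Arguments. Unset Strict Implicit. Unset Printing Implicit Defensive.
Import Order.TTheory GRing.Theory Num.Theory.
Local Open Scope ring_scope.

Definition posdef (R : realType) (n : nat) (A : 'M[R]_n) : Prop :=
  A^T = A /\ forall x : 'cV[R]_n, x != 0 -> 0 < (x^T *m A *m x) 0 0.

Definition ci_graph (R : realType) (n : nat) (A : 'M[R]_n) : rel 'I_n :=
  fun i j => (i != j) && (invmx A i j != 0).

Definition is_tree (n : nat) (e : rel 'I_n) : Prop :=
  (forall i j : 'I_n, connect e i j) /\
  ~ (exists c : seq 'I_n, [/\ 3 <= size c, uniq c & cycle e c])%N.

Definition smallest_eigenvalue (R : realType) (n : nat) (A : 'M[R]_n) (lam : R) : Prop :=
  eigenvalue A lam /\ forall a, eigenvalue A a -> lam <= a.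

Definition nonneg_diag (R : realType) (n : nat) (D : 'M[R]_n) : Prop :=
  is_diag_mx D /\ forall i, 0 <= D i i.

From HB Require Import structures.
From mathcomp Require Import all_boot all_order all_algebra.
From mathcomp Require Import reals.
From mathcomp Require Import complex sesquilinear spectral.
From mathcomp Require Import ring lra.
Set Implicit Arguments. Unset Strict Implicit. Unset Printing Implicit Defensive.
Import Order.TTheory GRing.Theory Num.Theory.
Local Open Scope ring_scope.

(* Write A := Sstar and B := S'; they have the same off-diagonal entries and
   B_kk < A_kk + lamstar.  Suppose {i, j} is an edge of the tree of B but not
   of the tree of A, and let k be the neighbour of i on the A-path from i to j.
   In a positive definite matrix whose concentration graph is a tree, removing
   an edge {a, b} leaves a component of b on which A_ax A_bb = A_ab A_bx; this
   gives A_ij A_kk = A_ik A_kj.  In the tree of B, k lies on the side of some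
   endpoint u of {i, j}, and the same identity (with B_ij <> 0) gives
   B_uk^2 = A_kk B_uu.  But the Rayleigh bound lamstar |x|^2 <= x^T B x at
   x = B_uk e_u - B_uu e_k gives B_uk^2 <= B_uu (B_kk - lamstar) < B_uu A_kk.
   So the tree of B is a spanning subgraph of the tree of A, hence equal to it. *)

Section NormalForm.
Local Open Scope sesquilinear_scope.
Variables (C : numClosedFieldType) (n : nat) (A : 'M[C]_n).
Hypothesis A_normal : A \is normalmx.

Let P := spectralmx A.
Let d := spectral_diag A.

Lemma spectral_diag_eigenvalue j : eigenvalue A (d 0 j).
Proof.
have P_unitary : P \is unitarymx := spectral_unitarymx A.
have PA : P *m A = diag_mx d *m P.
  by rewrite {1}(orthomx_spectralP A_normal) !mulmxA mulmxV ?spectral_unit ?mul1mx.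
apply/eigenvalueP; exists (row j P).
  by rewrite -row_mul PA row_mul row_diag_mx -scalemxAl -rowE.
apply/eqP => /(congr1 (mulmx^~ (P^t*))).
rewrite -row_mul mul0mx (unitarymxP P_unitary) => /matrixP /(_ 0 j).
by rewrite !mxE eqxx => /eqP; rewrite oner_eq0.
Qed.

Lemma normalmx_form_ge (lam : C) : (forall j, lam <= d 0 j) ->
  forall x : 'cV_n, lam * (x^t* *m x) 0 0 <= (x^t* *m A *m x) 0 0.
Proof.
move=> lam_le x; have P_unitary : P \is unitarymx := spectral_unitarymx A.
pose w := P *m x.
have -> : x^t* *m A *m x = w^t* *m diag_mx d *m w.
  by rewrite {1}(orthomx_spectralP A_normal) invmx_unitary // /w trmx_mul map_mxM !mulmxA.
have -> : x^t* *m x = w^t* *m w by rewrite /w trmx_mul map_mxM !mulmxA mulmxKtV.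
rewrite -subr_ge0 !mxE mulr_sumr -sumrB; apply: sumr_ge0 => j _.
rewrite mul_mx_diag !mxE mulrAC [lam * _]mulrC -mulrBr mulr_ge0 ?subr_ge0 //.
by rewrite mulrC mul_conjC_ge0.
Qed.

End NormalForm.

Section RealSymmetric.
Local Open Scope sesquilinear_scope.
Variables (R : rcfType) (n : nat) (B : 'M[R]_n) (lam : R).
Hypotheses (B_sym : B^T = B) (lam_le_eig : forall a, eigenvalue B a -> lam <= a).
Local Notation f := (real_complex R).

Lemma symmetric_form_ge (x : 'cV[R]_n) :
  lam * (x^T *m x) 0 0 <= (x^T *m B *m x) 0 0.
Proof.
pose Bc := B ^ f.
have Bc_herm : Bc \is hermsymmx.
  apply: realsym_hermsym.
      by apply/is_hermitianmxP; rewrite expr0 scale1r map_mx_id // /Bc map_trmx B_sym.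
  by apply/mxOverP => i j; rewrite mxE; apply/complex_realP; exists (B i j).
have Bc_normal := hermitian_normalmx Bc_herm.
have lam_le_diag j : f lam <= spectral_diag Bc 0 j.
  have /mxOverP/(_ 0 j)/RRe_real dE := hermitian_spectral_diag_real Bc_herm.
  rewrite -dE lecR; apply: lam_le_eig.
  by have := spectral_diag_eigenvalue Bc_normal j; rewrite -dE eigenvalue_map.
pose xc := x ^ f.
have xE : xc^t* = x^T ^ f.
  by apply/matrixP => i j; rewrite !mxE conj_Creal // complex_real.
have := normalmx_form_ge Bc_normal lam_le_diag xc.
by rewrite xE -!map_mxM !mxE -rmorphM lecR.
Qed.
End RealSymmetric.

Lemma connect_uniq_path (T : finType) (e : rel T) x y : connect e x y ->
  exists p, [/\ path e x p, last x p = y & uniq (x :: p)].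
Proof. by case/connectP => p /shortenP[p' ? ? _] ->; exists p'. Qed.

Section Forest.
Variables (T : finType) (e : rel T).

Definition deledge (a b : T) : rel T := fun x y =>
  e x y && ~~ ((x == a) && (y == b) || (x == b) && (y == a)).

Definition acyclic := ~ exists c : seq T, [/\ (3 <= size c)%N, uniq c & cycle e c].

Lemma deledgeC a b : deledge a b =2 deledge b a.
Proof. by move=> x y; rewrite /deledge orbC. Qed.

Lemma deledge_sub a b : subrel (deledge a b) e.
Proof. by move=> x y /andP[]. Qed.

Lemma path_deledge a b x p : a \notin x :: p -> path e x p -> path (deledge a b) x p.
Proof.
move=> a_notin; apply: (@sub_in_path _ (predC1 a)) => [u v /= ua va euv|].
  by rewrite /deledge euv (negbTE ua) (negbTE va) andbF.
by apply/allP => z z_in /=; apply: contraNneq a_notin => <-.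
Qed.

Lemma connect_deledge a b k : connect e a k ->
  connect (deledge a b) a k || connect (deledge a b) b k.
Proof.
case/connect_uniq_path => -[|v p] [e_p <- uniq_p]; first by rewrite connect0.
case/andP: e_p => eav e_p; case/andP: uniq_p => a_notin _.
have [vb|vb] := eqVneq v b.
  by apply/orP; right; apply/connectP; exists p; rewrite -?vb ?path_deledge.
apply/orP; left; apply/connectP; exists (v :: p) => //=.
have va : v != a by apply: contraNneq a_notin => ->; rewrite mem_head.
rewrite {1}/deledge eav eqxx (negbTE vb) (negbTE va) !andbF /=.
exact: path_deledge.
Qed.

Lemma acyclic_deledge_sep a b : acyclic -> e a b -> a != b ->
  ~~ connect (deledge a b) b a.
Proof.
move=> acyc eab ab; apply/negP => /connect_uniq_path[[|v [|w p]] [/= e_p last_p uniq_p]].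
- by rewrite last_p eqxx in ab.
- by move: e_p; rewrite last_p /deledge !eqxx orbT !andbF.
apply: acyc; exists [:: b, v, w & p]; split => //.
have e_cyc : path e b [:: v, w & p] by apply: sub_path (@deledge_sub a b) _ _ _.
by rewrite /cycle rcons_path e_cyc /= last_p.
Qed.

Lemma connect_next_hop i j : connect e i j -> i != j -> ~~ e i j ->
  exists k, [/\ e i k, k != i, k != j & connect (deledge i k) k j].
Proof.
case/connect_uniq_path => -[|v [|w p]] [/= e_p last_p uniq_p] ij not_eij.
- by rewrite last_p eqxx in ij.
- by move: e_p; rewrite andbT last_p (negbTE not_eij).
case/and3P: e_p => eiv evw e_p; case/andP: uniq_p => i_notin uniq_p.
exists v; split => //.
- by apply: contraNneq i_notin => ->; rewrite mem_head.
- by rewrite -last_p; apply: contraTneq uniq_p => ->; rewrite /= mem_last.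
apply/connectP; exists (w :: p) => //.
by apply: path_deledge; rewrite //= evw.
Qed.

Lemma acyclic_spanning_sub (e' : rel T) : acyclic -> symmetric e ->
  (forall x y, connect e' x y) -> subrel e' e ->
  forall x y, x != y -> e x y -> e' x y.
Proof.
move=> acyc e_sym e'_conn e'e x y xy exy.
have [[|v [|w p]] [/= e'_p last_p uniq_p]] := connect_uniq_path (e'_conn x y).
- by rewrite last_p eqxx in xy.
- by move: e'_p; rewrite andbT last_p.
exfalso; apply: acyc; exists [:: x, v, w & p]; split => //.
have e_cyc : path e x [:: v, w & p] by apply: sub_path e'e _ _ _.
by rewrite /cycle rcons_path e_cyc /= last_p e_sym.
Qed.
End Forest.

Section Quadratic.
Variables (R : comPzRingType) (n : nat) (M : 'M[R]_n).

Lemma form_delta (i k : 'I_n) :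
  ((delta_mx i 0 : 'cV[R]_n)^T *m M *m delta_mx k 0) = (M i k)%:M.
Proof. by apply/matrixP => ? ?; rewrite !ord1 trmx_delta -rowE -colE !mxE. Qed.

Lemma form_delta2 (i k : 'I_n) (a b : R) :
  let x := a *: (delta_mx i 0 : 'cV[R]_n) - b *: delta_mx k 0 in
  (x^T *m M *m x) 0 0 = a * a * M i i - a * b * M i k - b * a * M k i + b * b * M k k.
Proof.
rewrite /= [_^T]linearB /= ![_^T]linearZ /= !mulmxBl !mulmxBr.
by rewrite -!scalemxAl -!scalemxAr !form_delta !mxE /=; ring.
Qed.
End Quadratic.

Lemma sqr_offdiag_le (R : rcfType) n (B : 'M[R]_n) (lam : R) (i k : 'I_n) :
  B^T = B -> (forall a, eigenvalue B a -> lam <= a) -> 0 <= lam ->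
  i != k -> 0 < B i i -> B i k ^+ 2 <= B i i * (B k k - lam).
Proof.
move=> B_sym lam_le_eig lam_ge0 ik Bii_gt0.
(* At this vector the form is B_ii (B_ii B_kk - B_ik^2). *)
have := symmetric_form_ge B_sym lam_le_eig
  (B i k *: delta_mx i 0 - B i i *: delta_mx k 0).
rewrite -[X in _ * (X *m _) 0 0]mulmx1 !form_delta2 !mxE !eqxx.
rewrite (negbTE ik) eq_sym (negbTE ik) /=.
have -> : B k i = B i k by rewrite -{1}B_sym mxE.
move=> ?; nra.
Qed.

Lemma posdef_entryC (R : realType) n (A : 'M[R]_n) i j : posdef A -> A i j = A j i.
Proof. by case=> A_sym _; rewrite -{1}A_sym mxE. Qed.

Section PosDef.
Variables (R : realType) (n : nat) (A : 'M[R]_n).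
Hypothesis A_pd : posdef A.

Lemma posdef_form_eq0 (x : 'cV_n) : (x^T *m A *m x) 0 0 = 0 -> x = 0.
Proof. by move=> x0; have [//|/A_pd.2] := eqVneq x 0; rewrite x0 ltxx. Qed.

Lemma posdef_diag_gt0 i : 0 < A i i.
Proof.
have := A_pd.2 (delta_mx i 0); rewrite form_delta mxE eqxx mulr1n; apply.
by apply/negP => /eqP/matrixP/(_ i 0); rewrite !mxE !eqxx => /eqP; rewrite oner_eq0.
Qed.

Lemma posdef_unit : A \in unitmx.
Proof.
rewrite -row_free_unit; apply: inj_row_free => v vA.
by apply: trmx_inj; rewrite trmx0; apply: posdef_form_eq0; rewrite trmxK vA mul0mx mxE.
Qed.

Lemma posdef_eigenvalue_gt0 a : eigenvalue A a -> 0 < a.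
Proof.
case/eigenvalueP => v vA v0.
have := A_pd.2 v^T; rewrite trmx_eq0 trmxK vA -scalemxAl mxE => /(_ v0).
have : 0 <= (v *m v^T) 0 0.
  by rewrite mxE; apply: sumr_ge0 => j _; rewrite mxE -expr2 sqr_ge0.
move=> ? ?; nra.
Qed.

Lemma posdef_inv : posdef (invmx A).
Proof.
split=> [|x x_neq0]; first by rewrite trmx_inv A_pd.1.
have y_neq0 : invmx A *m x != 0.
  by apply: contraNneq x_neq0 => y0; rewrite -(mulKVmx posdef_unit x) y0 mulmx0.
have := A_pd.2 _ y_neq0; rewrite trmx_mul trmx_inv A_pd.1.
by rewrite -!mulmxA (mulmxA A) mulmxV ?posdef_unit // mul1mx.
Qed.

Lemma posdef_support_kernel (S : pred 'I_n) (z : 'cV_n) :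
  (forall s, ~~ S s -> z s 0 = 0) -> (forall s, S s -> (A *m z) s 0 = 0) -> z = 0.
Proof.
move=> z_supp Az_S; apply: posdef_form_eq0.
rewrite -mulmxA mxE big1 // => s _; rewrite mxE.
by have [/Az_S ->|/z_supp ->] := boolP (S s); rewrite ?mulr0 ?mul0r.
Qed.

Lemma ci_graph_sym : symmetric (ci_graph A).
Proof.
move=> i j; have := posdef_entryC i j posdef_inv.
by rewrite /ci_graph eq_sym => ->.
Qed.
End PosDef.

Section CITree.
Variables (R : realType) (n : nat) (A : 'M[R]_n).
Hypotheses (A_pd : posdef A) (A_acyclic : acyclic (ci_graph A)).
Local Notation G := (ci_graph A).

Lemma ci_tree_factor a b x : G a b -> connect (deledge G a b) b x ->
  A a x * A b b = A a b * A b x.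
Proof.
move=> Gab bx; have ab : a != b by case/andP: Gab.
have sep := acyclic_deledge_sep A_acyclic Gab ab.
have [-> | xb] := eqVneq x b; first by rewrite mulrC.
(* The restriction z of w to the b-side S lies in the kernel of the positive
   definite invmx A: invmx A *m w vanishes on S, and invmx A has no entries
   between S and the rest except at b, where w vanishes. *)
pose S s := connect (deledge G a b) b s && (s != b).
pose w : 'cV_n := A b b *: col a A - A b a *: col b A.
have Ow : invmx A *m w = A b b *: delta_mx a 0 - A b a *: delta_mx b 0.
  by rewrite mulmxBr -!scalemxAr !colE !mulmxA mulVmx ?posdef_unit // !mul1mx.
pose z : 'cV_n := \col_s (if S s then w s 0 else 0).
have z0 : z = 0.
  apply: (posdef_support_kernel (posdef_inv A_pd) (S := S)) => s Ss.
    by rewrite mxE (negbTE Ss).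
  case/andP: Ss => bs sb.
  have sa : s != a by apply: contraNneq sep => sa; rewrite sa in bs.
  transitivity ((invmx A *m w) s 0); last first.
    by rewrite Ow !mxE (negbTE sa) (negbTE sb) !mulr0 subrr.
  rewrite !mxE; apply: eq_bigr => t _; rewrite mxE; case St : (S t) => //.
  have [-> | tb] := eqVneq t b; first by rewrite !mxE [A b b * _]mulrC subrr.
  have st : s != t by apply: contraFneq St => <-; rewrite /S bs sb.
  suff -> : invmx A s t = 0 by rewrite !mul0r.
  apply/eqP; apply: contraFT St => Ost; rewrite /S tb andbT.
  apply: connect_trans bs (connect1 _).
  by rewrite /deledge /ci_graph Ost st (negbTE sa) (negbTE sb).
have /matrixP/(_ x 0) := z0; rewrite !mxE /S bx xb /= => /eqP.
rewrite subr_eq0 (posdef_entryC x a A_pd) (posdef_entryC x b A_pd).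
by rewrite (posdef_entryC b a A_pd) mulrC => /eqP.
Qed.

Lemma ci_tree_edge_neq0 a b : G a b -> A a b != 0.
Proof.
move=> Gab; apply/eqP => ab0; have /andP[ab Oab] := Gab.
have b_side_0 t : connect (deledge G a b) b t -> A a t = 0.
  move/(ci_tree_factor Gab)/eqP; rewrite ab0 mul0r mulf_eq0 => /orP[/eqP //|].
  by rewrite gt_eqF ?posdef_diag_gt0.
have /matrixP/(_ b a) := mulVmx (posdef_unit A_pd).
rewrite !mxE eq_sym (negbTE ab) (bigD1 a) //= big1 => [|t ta].
  move/eqP; rewrite addr0 mulf_eq0 [A a a == 0]gt_eqF ?posdef_diag_gt0 // orbF.
  by rewrite (posdef_entryC b a (posdef_inv A_pd)) (negbTE Oab).
have [-> | Obt] := eqVneq (invmx A b t) 0; first by rewrite mul0r.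
rewrite (posdef_entryC t a A_pd) b_side_0 ?mulr0 //.
have [-> | tb] := eqVneq t b; first exact: connect0.
apply: connect1; rewrite /deledge /ci_graph Obt eq_sym tb (negbTE ta) /=.
by rewrite eq_sym (negbTE ab) !andbF.
Qed.
End CITree.

Section TreeDecomposition.
Variables (R : realType) (n : nat) (A B : 'M[R]_n) (lam : R).
Hypotheses (A_pd : posdef A) (A_acyclic : acyclic (ci_graph A))
  (A_connected : forall i j, connect (ci_graph A) i j).
Hypotheses (B_pd : posdef B) (B_acyclic : acyclic (ci_graph B))
  (B_connected : forall i j, connect (ci_graph B) i j).
Hypotheses (lam_ge0 : 0 <= lam) (lam_le_eigB : forall a, eigenvalue B a -> lam <= a).
Hypotheses (AB_offdiag : forall i j, i != j -> A i j = B i j)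
  (B_diag_lt : forall k, B k k < A k k + lam).

Lemma sqr_offdiag_lt u k : u != k -> B u k ^+ 2 < A k k * B u u.
Proof.
move=> uk; have Buu_gt0 := posdef_diag_gt0 B_pd u.
apply: le_lt_trans (sqr_offdiag_le B_pd.1 lam_le_eigB lam_ge0 uk Buu_gt0) _.
by rewrite mulrC ltr_pM2r // ltrBlDr.
Qed.

Lemma edge_side_sqr u v k : ci_graph B u v -> k != u -> k != v ->
  A u v * A k k = A u k * A k v -> connect (deledge (ci_graph B) v u) u k ->
  A k k * B u u = B u k ^+ 2.
Proof.
move=> Buv ku kv A_sep side_k; have uv : u != v by case/andP: Buv.
have Bvu : ci_graph B v u by rewrite ci_graph_sym.
have E_A : B u v * A k k = B u k * B v k.
  by rewrite (posdef_entryC v k B_pd) -!AB_offdiag // eq_sym.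
have E_B : B v k * B u u = B u v * B u k.
  by rewrite (ci_tree_factor B_pd B_acyclic Bvu side_k) (posdef_entryC v u B_pd).
apply: (mulIf (ci_tree_edge_neq0 B_pd B_acyclic Buv)).
transitivity (B u u * (B u v * A k k)); first by ring.
rewrite E_A; transitivity (B u k * (B v k * B u u)); first by ring.
by rewrite E_B; ring.
Qed.

Lemma ci_graph_subrel : subrel (ci_graph B) (ci_graph A).
Proof.
move=> i j Bij; apply/negPn/negP => not_Aij; have ij : i != j by case/andP: Bij.
have [k [Aik ki kj side_kj]] := connect_next_hop (A_connected i j) ij not_Aij.
have A_sep : A i j * A k k = A i k * A k j := ci_tree_factor A_pd A_acyclic Aik side_kj.
case/orP: (connect_deledge j (B_connected i k)) => side_k.
  rewrite (eq_connect (deledgeC _ i j)) in side_k.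
  have ik : i != k by rewrite eq_sym.
  by have := sqr_offdiag_lt ik; rewrite -(edge_side_sqr Bij ki kj A_sep side_k) ltxx.
have Bji : ci_graph B j i by rewrite ci_graph_sym.
have A_sep' : A j i * A k k = A j k * A k i.
  rewrite (posdef_entryC j i A_pd) (posdef_entryC j k A_pd) (posdef_entryC k i A_pd).
  by rewrite A_sep mulrC.
have jk : j != k by rewrite eq_sym.
by have := sqr_offdiag_lt jk; rewrite -(edge_side_sqr Bji kj ki A_sep' side_k) ltxx.
Qed.

Lemma ci_graph_decomp_eq : ci_graph B =2 ci_graph A.
Proof.
move=> i j; apply/idP/idP => [|Aij]; first exact: ci_graph_subrel.
have [ij _] := andP Aij.
exact: (acyclic_spanning_sub A_acyclic (ci_graph_sym A_pd) B_connected ci_graph_subrel).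
Qed.
End TreeDecomposition.

Theorem mainTheorem6 (R : realType) (n : nat)
  (Sstar Dstar : 'M[R]_n) (lamstar : R) :
  posdef Sstar ->
  is_tree (ci_graph Sstar) ->
  smallest_eigenvalue Sstar lamstar ->
  nonneg_diag Dstar ->
  (forall i, Dstar i i < lamstar) ->
  forall S' D' : 'M[R]_n,
    Sstar + Dstar = S' + D' ->
    posdef S' ->
    (forall a, eigenvalue S' a -> lamstar <= a) ->
    is_tree (ci_graph S') ->
    nonneg_diag D' ->
    ci_graph S' =2 ci_graph Sstar.
Proof.
move=> Sstar_pd [Sstar_conn Sstar_acyc] [lam_eig _] [Dstar_diag _] Dstar_lt S' D' decomp
  S'_pd lam_le_eig [S'_conn S'_acyc] [D'_diag D'_ge0].
have entry i j : Sstar i j + Dstar i j = S' i j + D' i j.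
  by have /matrixP/(_ i j) := decomp; rewrite !mxE.
have offdiag i j : i != j -> Sstar i j = S' i j.
  move=> ij; have := entry i j.
  by rewrite (is_diag_mxP Dstar_diag) ?(is_diag_mxP D'_diag) ?addr0.
have diag_lt k : S' k k < Sstar k k + lamstar.
  have := entry k k; have := Dstar_lt k; have := D'_ge0 k; lra.
apply: ci_graph_decomp_eq offdiag diag_lt => //.
exact: ltW (posdef_eigenvalue_gt0 Sstar_pd lam_eig).
Qed.
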